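(* Let $\mathcal{W}$ be a weakly exact structure on an additive category $\mathcal{A}$. For objects $A,C$ let $\mathbb{W}(C,A)=\mathrm{Ext}^1_{\mathcal{W}}(C,A)$ be the class of equivalence classes $\overline{(i,d)}$ of short exact sequences $A\xrightarrow{i}B\xrightarrow{d}C$ in $\mathcal{W}$. For $a:A\to A'$ define $\mathbb{W}(C,a)(E)=aE$ as the pushout of $E$ along $a$, for $c:C'\to C$ define $\mathbb{W}(c,A)(E)=Ec$ as the pullback of $E$ along $c$, and define the sum (Baer sum) $E_1+E_2=\nabla_A(E_1\oplus E_2)\Delta_C$, with $\nabla_A:A\oplus A\to A$ the codiagonal and $\Delta_C:C\to C\oplus C$ the diagonal. Then these operations are well defined and make $\mathbb{W}$ an additive bifunctor $\mathcal{A}^{op}\times\mathcal{A}\to\mathrm{Ab}$.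
   Context: Let $\mathcal{A}$ be an additive category. A kernel-cokernel pair (short exact sequence) is a pair of composable morphisms $A\xrightarrow{i}B\xrightarrow{d}C$ with $i$ a kernel of $d$ and $d$ a cokernel of $i$. A weakly exact structure on $\mathcal{A}$ is a class $\mathcal{W}$ of kernel-cokernel pairs, closed under isomorphisms of sequences and under finite direct sums of sequences, such that, calling $i$ an admissible monic (resp. $d$ an admissible epic) if $(i,d)\in\mathcal{W}$ for some $d$ (resp. some $i$): (E0) $1_A$ is an admissible monic for every object $A$; (E0)$^{op}$ $1_A$ is an admissible epic for every object $A$; (E2) for every admissible monic $i:A\to B$ and every morphism $t:A\to C$ the pushout of $i$ along $t$ exists and the resulting morphism $C\to S$ is an admissible monic; (E2)$^{op}$ for every admissible epic $h:A\to C$ and every morphism $t:B\to C$ the pullback of $h$ along $t$ exists and the resulting morphism $P\to B$ is an admissible epic. Two short exact sequences $A\to B\to C$ and $A\to B'\to C$ are equivalent if there is an isomorphism $B\to B'$ making the diagram with identities on $A$ and $C$ commute. The pushout $aE$ of $E=(A\xrightarrow{i}B\xrightarrow{d}C)$ along $a:A\to A'$ is the sequence $A'\to B\sqcup_A A'\to C$ obtained from the pushout of $i$ and $a$; the pullback $Ec$ is defined dually. *)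

Set Implicit Arguments.
Unset Strict Implicit.

Record AddCat := {
  Ob : Type;
  Hom : Ob -> Ob -> Type;
  comp : forall A B C : Ob, Hom B C -> Hom A B -> Hom A C;
  idm : forall A : Ob, Hom A A;
  comp_assoc : forall (A B C D : Ob) (h : Hom C D) (g : Hom B C) (f : Hom A B),
      comp h (comp g f) = comp (comp h g) f;
  comp_id_l : forall (A B : Ob) (f : Hom A B), comp (idm B) f = f;
  comp_id_r : forall (A B : Ob) (f : Hom A B), comp f (idm A) = f;
  hzero : forall A B : Ob, Hom A B;
  hadd : forall A B : Ob, Hom A B -> Hom A B -> Hom A B;
  hopp : forall A B : Ob, Hom A B -> Hom A B;
  hadd_assoc : forall A B (f g h : Hom A B), hadd f (hadd g h) = hadd (hadd f g) h;
  hadd_comm : forall A B (f g : Hom A B), hadd f g = hadd g f;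
  hadd_0 : forall A B (f : Hom A B), hadd f (hzero A B) = f;
  hadd_opp : forall A B (f : Hom A B), hadd f (hopp f) = hzero A B;
  comp_addl : forall A B C (g1 g2 : Hom B C) (f : Hom A B),
      comp (hadd g1 g2) f = hadd (comp g1 f) (comp g2 f);
  comp_addr : forall A B C (g : Hom B C) (f1 f2 : Hom A B),
      comp g (hadd f1 f2) = hadd (comp g f1) (comp g f2);
  zob : Ob;
  zob_trivial : forall f g : Hom zob zob, f = g;
  bp : Ob -> Ob -> Ob;
  bi1 : forall A B, Hom A (bp A B);
  bi2 : forall A B, Hom B (bp A B);
  bp1 : forall A B, Hom (bp A B) A;
  bp2 : forall A B, Hom (bp A B) B;
  bp1_bi1 : forall A B, comp (bp1 A B) (bi1 A B) = idm A;
  bp2_bi2 : forall A B, comp (bp2 A B) (bi2 A B) = idm B;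
  bp_sum : forall A B, hadd (comp (bi1 A B) (bp1 A B)) (comp (bi2 A B) (bp2 A B))
                       = idm (bp A B)
}.

Arguments Hom {X} : rename.
Arguments comp {X A B C} : rename.
Arguments idm {X} : rename.
Arguments hzero {X} : rename.
Arguments hadd {X A B} : rename.
Arguments hopp {X A B} : rename.
Arguments zob {X} : rename.
Arguments bp {X} : rename.
Arguments bi1 {X} : rename.
Arguments bi2 {X} : rename.
Arguments bp1 {X} : rename.
Arguments bp2 {X} : rename.

Section Defs.
Variable X : AddCat.
Local Notation Ob := (Ob X).

Definition iso (A B : Ob) (f : Hom A B) : Prop :=
  exists g : Hom B A, comp g f = idm A /\ comp f g = idm B.

Definition hsum (A1 A2 B1 B2 : Ob) (f1 : Hom A1 B1) (f2 : Hom A2 B2)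
  : Hom (bp A1 A2) (bp B1 B2) :=
  hadd (comp (bi1 B1 B2) (comp f1 (bp1 A1 A2)))
       (comp (bi2 B1 B2) (comp f2 (bp2 A1 A2))).

Definition diag (C : Ob) : Hom C (bp C C) := hadd (bi1 C C) (bi2 C C).
Definition codiag (A : Ob) : Hom (bp A A) A := hadd (bp1 A A) (bp2 A A).

Definition is_kernel (A B C : Ob) (i : Hom A B) (d : Hom B C) : Prop :=
  comp d i = hzero A C /\
  forall (Y : Ob) (f : Hom Y B), comp d f = hzero Y C ->
    exists g : Hom Y A, comp i g = f /\ forall g', comp i g' = f -> g' = g.

Definition is_cokernel (A B C : Ob) (i : Hom A B) (d : Hom B C) : Prop :=
  comp d i = hzero A C /\
  forall (Y : Ob) (f : Hom B Y), comp f i = hzero A Y ->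
    exists g : Hom C Y, comp g d = f /\ forall g', comp g' d = f -> g' = g.

Definition kc_pair (A B C : Ob) (i : Hom A B) (d : Hom B C) : Prop :=
  is_kernel i d /\ is_cokernel i d.

Definition is_pushout (A B C S : Ob) (f : Hom A B) (g : Hom A C)
  (u : Hom B S) (v : Hom C S) : Prop :=
  comp u f = comp v g /\
  forall (Y : Ob) (x : Hom B Y) (y : Hom C Y), comp x f = comp y g ->
    exists h : Hom S Y, (comp h u = x /\ comp h v = y) /\
      forall h', comp h' u = x /\ comp h' v = y -> h' = h.

Definition is_pullback (A B C P : Ob) (f : Hom B A) (g : Hom C A)
  (u : Hom P B) (v : Hom P C) : Prop :=
  comp f u = comp g v /\
  forall (Y : Ob) (x : Hom Y B) (y : Hom Y C), comp f x = comp g y ->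
    exists h : Hom Y P, (comp u h = x /\ comp v h = y) /\
      forall h', comp u h' = x /\ comp v h' = y -> h' = h.

Definition Wclass := forall A B C : Ob, Hom A B -> Hom B C -> Prop.

Definition adm_monic (W : Wclass) (A B : Ob) (i : Hom A B) : Prop :=
  exists (C : Ob) (d : Hom B C), W A B C i d.
Definition adm_epic (W : Wclass) (B C : Ob) (d : Hom B C) : Prop :=
  exists (A : Ob) (i : Hom A B), W A B C i d.

Definition weakly_exact (W : Wclass) : Prop :=
  (forall A B C (i : Hom A B) (d : Hom B C), W A B C i d -> kc_pair i d) /\
  (forall A B C A' B' C' (i : Hom A B) (d : Hom B C) (i' : Hom A' B') (d' : Hom B' C')
          (al : Hom A A') (be : Hom B B') (ga : Hom C C'),
      W A B C i d -> iso al -> iso be -> iso ga ->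
      comp be i = comp i' al -> comp ga d = comp d' be -> W A' B' C' i' d') /\
  (W zob zob zob (idm zob) (idm zob)) /\
  (forall A1 B1 C1 A2 B2 C2 (i1 : Hom A1 B1) (d1 : Hom B1 C1)
          (i2 : Hom A2 B2) (d2 : Hom B2 C2),
      W A1 B1 C1 i1 d1 -> W A2 B2 C2 i2 d2 ->
      W (bp A1 A2) (bp B1 B2) (bp C1 C2) (hsum i1 i2) (hsum d1 d2)) /\
  (forall A : Ob, adm_monic W (idm A)) /\
  (forall A : Ob, adm_epic W (idm A)) /\
  (forall A B C (i : Hom A B) (t : Hom A C), adm_monic W i ->
      exists (S : Ob) (u : Hom B S) (v : Hom C S),
        is_pushout i t u v /\ adm_monic W v) /\
  (forall A B C (h : Hom A C) (t : Hom B C), adm_epic W h ->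
      exists (P : Ob) (u : Hom P A) (v : Hom P B),
        is_pullback h t u v /\ adm_epic W v).

Record ses (W : Wclass) (A C : Ob) := Ses {
  smid : Ob;
  si : Hom A smid;
  sd : Hom smid C;
  sW : W A smid C si sd
}.
Arguments Ses {W A C} smid si sd sW.

Definition ses_equiv (W : Wclass) (A C : Ob) (E E' : ses W A C) : Prop :=
  exists phi : Hom (smid E) (smid E'),
    iso phi /\ comp phi (si E) = si E' /\ comp (sd E') phi = sd E.

(* Ext^1_W(C, A): the equivalence classes, represented as predicates *)
Definition Ext (W : Wclass) (C A : Ob) : Type :=
  { P : ses W A C -> Prop | exists E : ses W A C, P = ses_equiv E }.

Definition cls (W : Wclass) (A C : Ob) (E : ses W A C) : Ext W C A :=
  exist _ (ses_equiv E) (ex_intro _ E eq_refl).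

(* (i', d') with middle object S is "the" pushout aE of E = (i, d) along a,
   obtained from the pushout (S, t, i') of i and a: d' is induced by d and 0. *)
Definition pushout_seq (A B C A' S : Ob) (i : Hom A B) (d : Hom B C) (a : Hom A A')
  (t : Hom B S) (i' : Hom A' S) (d' : Hom S C) : Prop :=
  is_pushout i a t i' /\ comp d' t = d /\ comp d' i' = hzero A' C.

(* (i', d') with middle object P is "the" pullback Ec of E = (i, d) along c,
   obtained from the pullback (P, s, d') of d and c: i' is induced by i and 0. *)
Definition pullback_seq (A B C C' P : Ob) (i : Hom A B) (d : Hom B C) (c : Hom C' C)
  (s : Hom P B) (d' : Hom P C') (i' : Hom A P) : Prop :=
  is_pullback d c s d' /\ comp s i' = i /\ comp d' i' = hzero A C'.

Definition is_abgroup (T : Type) (add : T -> T -> T) (z : T) (opp : T -> T) : Prop :=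
  (forall x y w, add x (add y w) = add (add x y) w) /\
  (forall x y, add x y = add y x) /\
  (forall x, add x z = x) /\
  (forall x, add x (opp x) = z).

End Defs.

(* Everything is
   reduced to two facts about a morphism (a, b, c) : E -> F of W-sequences:
   - the short five lemma [ses_mor_equiv]: if a and c are identities, then b is
     an isomorphism (proved with the pullback axiom (E2)^op, since no abelian
     ambient category is available);
   - the factorisation [push_pull_factor]: E -> F always factors through
     aE = Fc, so aE and Fc are equivalent sequences.
   From these, the chosen pushouts aE and pullbacks Ec of sequences respect
   equivalence, are functorial, commute with each other and with direct sums.
   Writing the Baer sum as [pushpull (E1 (+) E2) nabla Delta], where
   [pushpull F p j] stands for p(Fj), additivity of a |-> aE and c |-> Ec
   ([push_add], [pull_add]) makes [pushpull F] biadditive; the group axioms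
   then follow by evaluating it on the biproduct projections and injections. *)

From Stdlib Require Import Setoid Morphisms.
From Stdlib Require Import ClassicalEpsilon FunctionalExtensionality.
From Stdlib Require Import PropExtensionality ProofIrrelevance.

Set Implicit Arguments.
Unset Strict Implicit.

(** * Additive categories *)

Section Additive.
Variable X : AddCat.
Local Notation Ob := (Ob X).

Lemma hadd_0l (A B : Ob) (f : Hom A B) : hadd (hzero A B) f = f.
Proof. rewrite hadd_comm; apply hadd_0. Qed.

Lemma hadd_oppl (A B : Ob) (f : Hom A B) : hadd (hopp f) f = hzero A B.
Proof. rewrite hadd_comm; apply hadd_opp. Qed.

Lemma hadd_cancel (A B : Ob) (f g h : Hom A B) : hadd f g = hadd f h -> g = h.
Proof.
  intro H. rewrite <- (hadd_0l g), <- (hadd_0l h), <- (hadd_oppl f), <- !hadd_assoc, H.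
  reflexivity.
Qed.

Lemma idem_zero (A B : Ob) (x : Hom A B) : hadd x x = x -> x = hzero A B.
Proof. intro H. apply (hadd_cancel (f:=x)). rewrite H, hadd_0. reflexivity. Qed.

Lemma comp_0l (A B C : Ob) (f : Hom A B) : comp (hzero B C) f = hzero A C.
Proof. apply idem_zero. rewrite <- comp_addl, hadd_0. reflexivity. Qed.

Lemma comp_0r (A B C : Ob) (g : Hom B C) : comp g (hzero A B) = hzero A C.
Proof. apply idem_zero. rewrite <- comp_addr, hadd_0. reflexivity. Qed.

Lemma comp_oppl (A B C : Ob) (g : Hom B C) (f : Hom A B) :
  comp (hopp g) f = hopp (comp g f).
Proof.
  apply (hadd_cancel (f:= comp g f)). rewrite <- comp_addl, !hadd_opp, comp_0l. reflexivity.
Qed.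

Lemma comp_oppr (A B C : Ob) (g : Hom B C) (f : Hom A B) :
  comp g (hopp f) = hopp (comp g f).
Proof.
  apply (hadd_cancel (f:= comp g f)). rewrite <- comp_addr, !hadd_opp, comp_0r. reflexivity.
Qed.

Lemma bp1_bi2 (A B : Ob) : comp (bp1 A B) (bi2 A B) = hzero B A.
Proof.
  assert (H : comp (bp1 A B) (idm _) = bp1 A B) by apply comp_id_r.
  rewrite <- bp_sum, comp_addr, !comp_assoc, bp1_bi1, comp_id_l in H.
  assert (H2 : comp (comp (bp1 A B) (bi2 A B)) (bp2 A B) = hzero _ _).
  { apply (hadd_cancel (f := bp1 A B)). rewrite H, hadd_0. reflexivity. }
  rewrite <- (comp_id_r (comp (bp1 A B) (bi2 A B))), <- (bp2_bi2 A B),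
     comp_assoc, H2, comp_0l. reflexivity.
Qed.

Lemma bp2_bi1 (A B : Ob) : comp (bp2 A B) (bi1 A B) = hzero A B.
Proof.
  assert (H : comp (bp2 A B) (idm _) = bp2 A B) by apply comp_id_r.
  rewrite <- bp_sum, comp_addr, !comp_assoc, bp2_bi2, comp_id_l in H.
  assert (H2 : comp (comp (bp2 A B) (bi1 A B)) (bp1 A B) = hzero _ _).
  { apply (hadd_cancel (f := bp2 A B)). rewrite hadd_comm, H, hadd_0. reflexivity. }
  rewrite <- (comp_id_r (comp (bp2 A B) (bi1 A B))), <- (bp1_bi1 A B),
     comp_assoc, H2, comp_0l. reflexivity.
Qed.

Lemma bp_ext_in (Y A B : Ob) (f g : Hom Y (bp A B)) :
  comp (bp1 A B) f = comp (bp1 A B) g -> comp (bp2 A B) f = comp (bp2 A B) g -> f = g.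
Proof.
  intros H1 H2. rewrite <- (comp_id_l f), <- (comp_id_l g), <- bp_sum,
    !comp_addl, <- !comp_assoc, H1, H2. reflexivity.
Qed.

Lemma bp_ext_out (Y A B : Ob) (f g : Hom (bp A B) Y) :
  comp f (bi1 A B) = comp g (bi1 A B) -> comp f (bi2 A B) = comp g (bi2 A B) -> f = g.
Proof.
  intros H1 H2. rewrite <- (comp_id_r f), <- (comp_id_r g), <- bp_sum,
    !comp_addr, !comp_assoc, H1, H2. reflexivity.
Qed.

Section HsumComponents.
Variables (A1 A2 B1 B2 : Ob) (f1 : Hom A1 B1) (f2 : Hom A2 B2).

Lemma bp1_hsum : comp (bp1 B1 B2) (hsum f1 f2) = comp f1 (bp1 A1 A2).
Proof.
  unfold hsum. rewrite comp_addr, !comp_assoc, bp1_bi1, bp1_bi2, comp_id_l, !comp_0l, hadd_0.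
  reflexivity.
Qed.

Lemma bp2_hsum : comp (bp2 B1 B2) (hsum f1 f2) = comp f2 (bp2 A1 A2).
Proof.
  unfold hsum. rewrite comp_addr, !comp_assoc, bp2_bi2, bp2_bi1, comp_id_l, !comp_0l, hadd_0l.
  reflexivity.
Qed.

Lemma hsum_bi1 : comp (hsum f1 f2) (bi1 A1 A2) = comp (bi1 B1 B2) f1.
Proof.
  unfold hsum. rewrite comp_addl, <- !comp_assoc, bp1_bi1, bp2_bi1, comp_id_r, !comp_0r, hadd_0.
  reflexivity.
Qed.

Lemma hsum_bi2 : comp (hsum f1 f2) (bi2 A1 A2) = comp (bi2 B1 B2) f2.
Proof.
  unfold hsum. rewrite comp_addl, <- !comp_assoc, bp2_bi2, bp1_bi2, comp_id_r, !comp_0r, hadd_0l.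
  reflexivity.
Qed.

End HsumComponents.

Lemma hsum_comp (A1 A2 B1 B2 C1 C2 : Ob) (f : Hom B1 C1) (g : Hom B2 C2)
  (f' : Hom A1 B1) (g' : Hom A2 B2) :
  comp (hsum f g) (hsum f' g') = hsum (comp f f') (comp g g').
Proof.
  apply bp_ext_in.
  - rewrite comp_assoc, !bp1_hsum, <- comp_assoc, bp1_hsum, comp_assoc. reflexivity.
  - rewrite comp_assoc, !bp2_hsum, <- comp_assoc, bp2_hsum, comp_assoc. reflexivity.
Qed.

Lemma hsum_id (A B : Ob) : hsum (idm A) (idm B) = idm (bp A B).
Proof. unfold hsum. rewrite !comp_id_l. apply bp_sum. Qed.

Lemma bp1_diag (C : Ob) : comp (bp1 C C) (diag C) = idm C.
Proof. unfold diag. rewrite comp_addr, bp1_bi1, bp1_bi2, hadd_0. reflexivity. Qed.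

Lemma bp2_diag (C : Ob) : comp (bp2 C C) (diag C) = idm C.
Proof. unfold diag. rewrite comp_addr, bp2_bi2, bp2_bi1, hadd_0l. reflexivity. Qed.

Lemma codiag_bi1 (C : Ob) : comp (codiag C) (bi1 C C) = idm C.
Proof. unfold codiag. rewrite comp_addl, bp1_bi1, bp2_bi1, hadd_0. reflexivity. Qed.

Lemma codiag_bi2 (C : Ob) : comp (codiag C) (bi2 C C) = idm C.
Proof. unfold codiag. rewrite comp_addl, bp2_bi2, bp1_bi2, hadd_0l. reflexivity. Qed.

Lemma diag_nat (C C' : Ob) (c : Hom C' C) : comp (diag C) c = comp (hsum c c) (diag C').
Proof.
  apply bp_ext_in.
  - rewrite !comp_assoc, bp1_diag, bp1_hsum, <- comp_assoc, bp1_diag, comp_id_l, comp_id_r.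
    reflexivity.
  - rewrite !comp_assoc, bp2_diag, bp2_hsum, <- comp_assoc, bp2_diag, comp_id_l, comp_id_r.
    reflexivity.
Qed.

Lemma codiag_nat (A A' : Ob) (a : Hom A A') : comp a (codiag A) = comp (codiag A') (hsum a a).
Proof.
  apply bp_ext_out.
  - rewrite <- !comp_assoc, codiag_bi1, hsum_bi1, comp_assoc, codiag_bi1, comp_id_l, comp_id_r.
    reflexivity.
  - rewrite <- !comp_assoc, codiag_bi2, hsum_bi2, comp_assoc, codiag_bi2, comp_id_l, comp_id_r.
    reflexivity.
Qed.

Lemma hadd_via_biproduct (A A' : Ob) (a b : Hom A A') :
  hadd a b = comp (codiag A') (comp (hsum a b) (diag A)).
Proof.
  unfold diag. rewrite comp_addr, hsum_bi1, hsum_bi2, comp_addr, !comp_assoc,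
    codiag_bi1, codiag_bi2, !comp_id_l. reflexivity.
Qed.

Lemma bp1_bi1_comp (A B Y : Ob) (f : Hom Y A) : comp (bp1 A B) (comp (bi1 A B) f) = f.
Proof. rewrite comp_assoc, bp1_bi1, comp_id_l. reflexivity. Qed.
Lemma bp2_bi2_comp (A B Y : Ob) (f : Hom Y B) : comp (bp2 A B) (comp (bi2 A B) f) = f.
Proof. rewrite comp_assoc, bp2_bi2, comp_id_l. reflexivity. Qed.
Lemma bp1_bi2_comp (A B Y : Ob) (f : Hom Y B) : comp (bp1 A B) (comp (bi2 A B) f) = hzero Y A.
Proof. rewrite comp_assoc, bp1_bi2, comp_0l. reflexivity. Qed.
Lemma bp2_bi1_comp (A B Y : Ob) (f : Hom Y A) : comp (bp2 A B) (comp (bi1 A B) f) = hzero Y B.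
Proof. rewrite comp_assoc, bp2_bi1, comp_0l. reflexivity. Qed.

(** * Kernels, cokernels, pushouts and pullbacks *)

Lemma iso_id (A : Ob) : iso (idm A).
Proof. exists (idm A). rewrite comp_id_l. split; reflexivity. Qed.

Lemma ker_mono (A B C Y : Ob) (i : Hom A B) (d : Hom B C) (x y : Hom Y A) :
  is_kernel i d -> comp i x = comp i y -> x = y.
Proof.
  intros [H0 H] E. destruct (H Y (comp i x)) as [g [_ Hg]].
  { rewrite comp_assoc, H0, comp_0l. reflexivity. }
  rewrite (Hg x eq_refl), (Hg y (eq_sym E)). reflexivity.
Qed.

Lemma coker_epi (A B C Y : Ob) (i : Hom A B) (d : Hom B C) (x y : Hom C Y) :
  is_cokernel i d -> comp x d = comp y d -> x = y.
Proof.
  intros [H0 H] E. destruct (H Y (comp x d)) as [g [_ Hg]].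
  { rewrite <- comp_assoc, H0, comp_0r. reflexivity. }
  rewrite (Hg x eq_refl), (Hg y (eq_sym E)). reflexivity.
Qed.

Lemma pushout_ext (A B C S Y : Ob) (f : Hom A B) (g : Hom A C) (u : Hom B S) (v : Hom C S)
  (x y : Hom S Y) : is_pushout f g u v -> comp x u = comp y u -> comp x v = comp y v -> x = y.
Proof.
  intros [H0 H] E1 E2. destruct (H Y (comp x u) (comp x v)) as [h [_ Hh]].
  { rewrite <- !comp_assoc, H0. reflexivity. }
  rewrite (Hh x (conj eq_refl eq_refl)), (Hh y (conj (eq_sym E1) (eq_sym E2))). reflexivity.
Qed.

Lemma pullback_ext (A B C P Y : Ob) (f : Hom B A) (g : Hom C A) (u : Hom P B) (v : Hom P C)
  (x y : Hom Y P) : is_pullback f g u v -> comp u x = comp u y -> comp v x = comp v y -> x = y.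
Proof.
  intros [H0 H] E1 E2. destruct (H Y (comp u x) (comp v x)) as [h [_ Hh]].
  { rewrite !comp_assoc, H0. reflexivity. }
  rewrite (Hh x (conj eq_refl eq_refl)), (Hh y (conj (eq_sym E1) (eq_sym E2))). reflexivity.
Qed.

Lemma pushout_unique (A B C S S' : Ob) (f : Hom A B) (g : Hom A C) (u : Hom B S) (v : Hom C S)
  (u' : Hom B S') (v' : Hom C S') :
  is_pushout f g u v -> is_pushout f g u' v' ->
  exists phi : Hom S S', iso phi /\ comp phi u = u' /\ comp phi v = v'.
Proof.
  intros P1 P2. pose proof P1 as [E1 H1]. pose proof P2 as [E2 H2].
  destruct (H1 S' u' v' E2) as [h [[Hu Hv] _]].
  destruct (H2 S u v E1) as [k [[Ku Kv] _]].
  exists h. split; [|split; assumption].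
  exists k. split.
  - apply (pushout_ext (x:=comp k h) (y:=idm S) P1); rewrite <- comp_assoc, comp_id_l.
    + rewrite Hu, Ku. reflexivity.
    + rewrite Hv, Kv. reflexivity.
  - apply (pushout_ext (x:=comp h k) (y:=idm S') P2); rewrite <- comp_assoc, comp_id_l.
    + rewrite Ku, Hu. reflexivity.
    + rewrite Kv, Hv. reflexivity.
Qed.

Lemma pullback_unique (A B C P P' : Ob) (f : Hom B A) (g : Hom C A) (u : Hom P B) (v : Hom P C)
  (u' : Hom P' B) (v' : Hom P' C) :
  is_pullback f g u v -> is_pullback f g u' v' ->
  exists phi : Hom P' P, iso phi /\ comp u phi = u' /\ comp v phi = v'.
Proof.
  intros P1 P2. pose proof P1 as [E1 H1]. pose proof P2 as [E2 H2].
  destruct (H1 P' u' v' E2) as [h [[Hu Hv] _]].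
  destruct (H2 P u v E1) as [k [[Ku Kv] _]].
  exists h. split; [|split; assumption].
  exists k. split.
  - apply (pullback_ext (x:=comp k h) (y:=idm P') P2); rewrite comp_assoc, comp_id_r.
    + rewrite Ku, Hu. reflexivity.
    + rewrite Kv, Hv. reflexivity.
  - apply (pullback_ext (x:=comp h k) (y:=idm P) P1); rewrite comp_assoc, comp_id_r.
    + rewrite Hu, Ku. reflexivity.
    + rewrite Hv, Kv. reflexivity.
Qed.

Lemma pushout_seq_coker (A B C A' S : Ob) (i : Hom A B) (d : Hom B C) (a : Hom A A')
  (t : Hom B S) (i' : Hom A' S) (d' : Hom S C) :
  is_cokernel i d -> pushout_seq i d a t i' d' -> is_cokernel i' d'.
Proof.
  intros [Zd Ud] [HP [Ht Hi']]. split; [exact Hi'|].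
  intros Y f Hf.
  destruct (Ud Y (comp f t)) as [g [Hg Ug]].
  { destruct HP as [Hc _]. rewrite <- comp_assoc, Hc, comp_assoc, Hf, comp_0l. reflexivity. }
  exists g. split.
  - apply (pushout_ext HP).
    + rewrite <- comp_assoc, Ht. exact Hg.
    + rewrite <- comp_assoc, Hi', comp_0r, Hf. reflexivity.
  - intros g' Hg'. apply Ug. rewrite <- Ht, comp_assoc, Hg'. reflexivity.
Qed.

Lemma pullback_seq_ker (A B C C' P : Ob) (i : Hom A B) (d : Hom B C) (c : Hom C' C)
  (s : Hom P B) (d' : Hom P C') (i' : Hom A P) :
  is_kernel i d -> pullback_seq i d c s d' i' -> is_kernel i' d'.
Proof.
  intros [Zi Ui] [HP [Hs Hi']]. split; [exact Hi'|].
  intros Y f Hf.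
  destruct (Ui Y (comp s f)) as [g [Hg Ug]].
  { destruct HP as [Hc _]. rewrite comp_assoc, Hc, <- comp_assoc, Hf, comp_0r. reflexivity. }
  exists g. split.
  - apply (pullback_ext HP).
    + rewrite comp_assoc, Hs. exact Hg.
    + rewrite comp_assoc, Hi', comp_0l, Hf. reflexivity.
  - intros g' Hg'. apply Ug. rewrite <- Hs, <- comp_assoc, Hg'. reflexivity.
Qed.

End Additive.

(** * Sequences of a weakly exact structure *)

Section WeaklyExact.
Variable X : AddCat.
Variable W : Wclass X.
Arguments W : clear implicits.
Hypothesis HW : weakly_exact W.
Local Notation Ob := (Ob X).

Lemma W_kc (A B C : Ob) (i : Hom A B) (d : Hom B C) : W A B C i d -> kc_pair i d.
Proof. destruct HW as [H _]; exact (H A B C i d). Qed.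

Lemma W_iso A B C A' B' C' (i : Hom A B) (d : Hom B C) (i' : Hom A' B') (d' : Hom B' C')
  (al : Hom A A') (be : Hom B B') (ga : Hom C C') :
  W A B C i d -> iso al -> iso be -> iso ga ->
  comp be i = comp i' al -> comp ga d = comp d' be -> W A' B' C' i' d'.
Proof. destruct HW as (_ & H & _); apply H. Qed.

Lemma W_sum A1 B1 C1 A2 B2 C2 (i1 : Hom A1 B1) (d1 : Hom B1 C1)
  (i2 : Hom A2 B2) (d2 : Hom B2 C2) :
  W A1 B1 C1 i1 d1 -> W A2 B2 C2 i2 d2 ->
  W (bp A1 A2) (bp B1 B2) (bp C1 C2) (hsum i1 i2) (hsum d1 d2).
Proof. destruct HW as (_ & _ & _ & H & _); apply H. Qed.

Lemma W_E0 (A : Ob) : adm_monic W (idm A).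
Proof. destruct HW as (_ & _ & _ & _ & H & _); apply H. Qed.

Lemma W_E2 A B C (i : Hom A B) (t : Hom A C) : adm_monic W i ->
  exists (S : Ob) (u : Hom B S) (v : Hom C S), is_pushout i t u v /\ adm_monic W v.
Proof. destruct HW as (_ & _ & _ & _ & _ & _ & H & _); apply H. Qed.

Lemma W_E2op A B C (h : Hom A C) (t : Hom B C) : adm_epic W h ->
  exists (P : Ob) (u : Hom P A) (v : Hom P B), is_pullback h t u v /\ adm_epic W v.
Proof. destruct HW as (_ & _ & _ & _ & _ & _ & _ & H); apply H. Qed.

Lemma W_zero (A B C : Ob) (i : Hom A B) (d : Hom B C) : W A B C i d -> comp d i = hzero A C.
Proof. intro H. destruct (W_kc H) as [[H1 _] _]. exact H1. Qed.

Lemma W_transfer_coker (A B0 C0 B C : Ob) (i0 : Hom A B0) (e0 : Hom B0 C0)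
  (phi : Hom B0 B) (i : Hom A B) (d : Hom B C) :
  W A B0 C0 i0 e0 -> iso phi -> comp phi i0 = i -> is_cokernel i d -> W A B C i d.
Proof.
  intros HE [psi [Hpsi1 Hpsi2]] Hi Hd.
  destruct (W_kc HE) as [_ [Z0 U0]]. pose proof Hd as [Zd Ud].
  destruct (U0 C (comp d phi)) as [ga [Hga _]].
  { rewrite <- comp_assoc, Hi. exact Zd. }
  destruct (Ud C0 (comp e0 psi)) as [de [Hde _]].
  { rewrite <- comp_assoc, <- Hi, (comp_assoc psi), Hpsi1, comp_id_l. exact Z0. }
  apply (W_iso (al := idm A) (be := phi) (ga := ga) HE).
  - apply iso_id.
  - exists psi; split; assumption.
  - exists de. split.
    + apply (coker_epi (i:=i0) (d:=e0)); [split; assumption|].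
      rewrite <- comp_assoc, Hga, comp_assoc, Hde, <- comp_assoc, Hpsi1, comp_id_r, comp_id_l.
      reflexivity.
    + apply (coker_epi Hd). rewrite <- comp_assoc, Hde, comp_assoc, Hga, <- comp_assoc, Hpsi2,
        comp_id_r, comp_id_l. reflexivity.
  - rewrite comp_id_r. exact Hi.
  - exact Hga.
Qed.

Lemma W_transfer_ker (A0 B0 A B C : Ob) (i0 : Hom A0 B0) (e0 : Hom B0 C)
  (phi : Hom B0 B) (i : Hom A B) (d : Hom B C) :
  W A0 B0 C i0 e0 -> iso phi -> comp d phi = e0 -> is_kernel i d -> W A B C i d.
Proof.
  intros HE [psi [Hpsi1 Hpsi2]] Hd Hi.
  destruct (W_kc HE) as [[Z0 U0] _]. pose proof Hi as [Zi Ui].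
  destruct (Ui A0 (comp phi i0)) as [al [Hal _]].
  { rewrite comp_assoc, Hd. exact Z0. }
  destruct (U0 A (comp psi i)) as [be [Hbe _]].
  { rewrite <- Hd, <- !comp_assoc, (comp_assoc phi psi), Hpsi2, comp_id_l. exact Zi. }
  apply (W_iso (al := al) (be := phi) (ga := idm C) HE).
  - exists be. split.
    + apply (ker_mono (i:=i0) (d:=e0)); [split; assumption|].
      rewrite comp_assoc, Hbe, <- comp_assoc, Hal, comp_assoc, Hpsi1, comp_id_l, comp_id_r.
      reflexivity.
    + apply (ker_mono Hi). rewrite comp_assoc, Hal, <- comp_assoc, Hbe, comp_assoc, Hpsi2,
        comp_id_l, comp_id_r. reflexivity.
  - exists psi; split; assumption.
  - apply iso_id.
  - symmetry; exact Hal.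
  - rewrite comp_id_l. symmetry; exact Hd.
Qed.

Lemma push_ex (A C A' : Ob) (E : ses W A C) (a : Hom A A') :
  exists (S : Ob) (t : Hom (smid E) S) (i' : Hom A' S) (d' : Hom S C),
    pushout_seq (si E) (sd E) a t i' d'.
Proof.
  destruct (W_E2 a (ex_intro _ C (ex_intro _ (sd E) (sW E)))) as [S [u [v [HP _]]]].
  pose proof HP as [Hc U].
  destruct (U C (sd E) (hzero A' C)) as [d' [[H1 H2] _]].
  { rewrite comp_0l. apply (W_zero (sW E)). }
  exists S, u, v, d'. split; [exact HP| split; assumption].
Qed.

(* Any pushout sequence is isomorphic to the admissible one provided by (E2). *)
Lemma push_W (A C A' S : Ob) (E : ses W A C) (a : Hom A A')
  (t : Hom (smid E) S) (i' : Hom A' S) (d' : Hom S C) :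
  pushout_seq (si E) (sd E) a t i' d' -> W A' S C i' d'.
Proof.
  intro HS.
  destruct (W_E2 a (ex_intro _ C (ex_intro _ (sd E) (sW E))))
    as [S0 [u0 [v0 [HP0 [C0 [e0 He0]]]]]].
  destruct (pushout_unique HP0 (proj1 HS)) as [phi [Hphi [_ Hv]]].
  apply (W_transfer_coker He0 Hphi Hv).
  apply (pushout_seq_coker (proj2 (W_kc (sW E))) HS).
Qed.

Lemma pull_ex (A C C' : Ob) (E : ses W A C) (c : Hom C' C) :
  exists (P : Ob) (s : Hom P (smid E)) (d' : Hom P C') (i' : Hom A P),
    pullback_seq (si E) (sd E) c s d' i'.
Proof.
  destruct (W_E2op c (ex_intro _ A (ex_intro _ (si E) (sW E)))) as [P [u [v [HP _]]]].
  pose proof HP as [Hc U].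
  destruct (U A (si E) (hzero A C')) as [i' [[H1 H2] _]].
  { rewrite comp_0r. apply (W_zero (sW E)). }
  exists P, u, v, i'. split; [exact HP| split; assumption].
Qed.

Lemma pull_W (A C C' P : Ob) (E : ses W A C) (c : Hom C' C)
  (s : Hom P (smid E)) (d' : Hom P C') (i' : Hom A P) :
  pullback_seq (si E) (sd E) c s d' i' -> W A P C' i' d'.
Proof.
  intro HS.
  destruct (W_E2op c (ex_intro _ A (ex_intro _ (si E) (sW E))))
    as [P0 [u0 [v0 [HP0 [A0 [i0 Hi0]]]]]].
  destruct (pullback_unique (proj1 HS) HP0) as [phi [Hphi [_ Hv]]].
  apply (W_transfer_ker Hi0 Hphi Hv).
  apply (pullback_seq_ker (proj1 (W_kc (sW E))) HS).
Qed.

Definition ses_mor (A C A' C' : Ob) (E : ses W A C) (F : ses W A' C')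
  (a : Hom A A') (c : Hom C C') : Prop :=
  exists b : Hom (smid E) (smid F),
    comp b (si E) = comp (si F) a /\ comp (sd F) b = comp c (sd E).

(* Pull d
   back along d' to (P, u, v); then v is admissible epic with a kernel i0, and
   the inverse g of k is induced on the cokernel v by u + i q, where
   i' q = v - k u. *)
Lemma ses_mor_equiv (A C : Ob) (E F : ses W A C) :
  ses_mor E F (idm A) (idm C) -> ses_equiv E F.
Proof.
  intros [k [Hki Hdk]]. rewrite comp_id_r in Hki. rewrite comp_id_l in Hdk.
  destruct E as [B i d HE]; destruct F as [B' i' d' HF]; simpl in *.
  destruct (W_kc HE) as [[Zi Ui] _].
  destruct (W_kc HF) as [[Zi' Ui'] _].
  destruct (W_E2op d' (ex_intro _ A (ex_intro _ i HE))) as [P [u [v [HP [K [i0 H0]]]]]].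
  pose proof HP as [Hdu UP].
  destruct (W_kc H0) as [_ [Z0 U0]].
  destruct (Ui' P (hadd v (hopp (comp k u)))) as [q [Hq _]].
  { rewrite comp_addr, comp_oppr, comp_assoc, Hdk, <- Hdu, hadd_opp. reflexivity. }
  destruct (Ui K (comp u i0)) as [y [Hy _]].
  { rewrite comp_assoc, Hdu, <- comp_assoc, Z0, comp_0r. reflexivity. }
  assert (Hqi0 : comp q i0 = hopp y).
  { apply (ker_mono (i:=i') (d:=d')); [split; assumption|].
    rewrite comp_assoc, Hq, comp_addl, Z0, comp_oppl, <- comp_assoc, <- Hy, comp_assoc, Hki,
      comp_oppr, hadd_0l. reflexivity. }
  destruct (U0 B (hadd u (comp i q))) as [g [Hg _]].
  { rewrite comp_addl, <- comp_assoc, Hqi0, <- Hy, comp_oppr, hadd_opp. reflexivity. }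
  (* the section s = (1, k) : B -> P of u *)
  destruct (UP B (idm B) k) as [s [[Hus Hvs] _]].
  { rewrite comp_id_r. symmetry; exact Hdk. }
  assert (Hqs : comp q s = hzero B A).
  { apply (ker_mono (i:=i') (d:=d')); [split; assumption|].
    rewrite comp_assoc, Hq, comp_addl, comp_oppl, <- comp_assoc, Hus, Hvs, comp_id_r,
      hadd_opp, comp_0r. reflexivity. }
  exists k. split; [|split; assumption].
  exists g. simpl. split.
  - (* g k = g v s = u s + i q s = 1 *)
    rewrite <- Hvs, comp_assoc, Hg, comp_addl, Hus, <- comp_assoc, Hqs, !comp_0r, hadd_0.
    reflexivity.
  - (* k g v = k u + i' q = v, and v is epic *)
    apply (coker_epi (i:=i0) (d:=v)); [split; assumption|].
    rewrite <- comp_assoc, Hg, comp_addr, comp_assoc, Hki, Hq, comp_id_l.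
    rewrite (hadd_comm v), hadd_assoc, hadd_opp, hadd_0l. reflexivity.
Qed.

Lemma equiv_ses_mor (A C : Ob) (E F : ses W A C) :
  ses_equiv E F -> ses_mor E F (idm A) (idm C).
Proof. intros [phi [_ [H1 H2]]]. exists phi. rewrite comp_id_r, comp_id_l. split; assumption. Qed.

Lemma ses_mor_comp (A C A' C' A'' C'' : Ob) (E : ses W A C) (F : ses W A' C')
  (G : ses W A'' C'') a c a' c' :
  ses_mor E F a c -> ses_mor F G a' c' -> ses_mor E G (comp a' a) (comp c' c).
Proof.
  intros [b [H1 H2]] [b' [H1' H2']]. exists (comp b' b). split.
  - rewrite <- comp_assoc, H1, comp_assoc, H1', comp_assoc. reflexivity.
  - rewrite comp_assoc, H2', <- comp_assoc, H2, comp_assoc. reflexivity.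
Qed.

Lemma ses_mor_equiv_r (A C A' C' : Ob) (E : ses W A C) (F G : ses W A' C') a c :
  ses_mor E F a c -> ses_equiv F G -> ses_mor E G a c.
Proof.
  intros H1 H2. pose proof (ses_mor_comp H1 (equiv_ses_mor H2)) as H.
  rewrite !comp_id_l in H. exact H.
Qed.

Lemma ses_mor_equiv_l (A C A' C' : Ob) (E F : ses W A C) (G : ses W A' C') a c :
  ses_equiv E F -> ses_mor F G a c -> ses_mor E G a c.
Proof.
  intros H1 H2. pose proof (ses_mor_comp (equiv_ses_mor H1) H2) as H.
  rewrite !comp_id_r in H. exact H.
Qed.

(* Equivalence of sequences is an equivalence relation; transitivity comes from
   the five lemma. *)
Global Instance ses_equiv_Equivalence (A C : Ob) : Equivalence (@ses_equiv X W A C).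
Proof.
  split.
  - intro E. exists (idm _). split; [apply iso_id|].
    rewrite comp_id_l, comp_id_r. split; reflexivity.
  - intros E F [phi [[psi [P1 P2]] [H1 H2]]]. exists psi.
    split; [exists phi; split; assumption|split].
    + rewrite <- H1, comp_assoc, P1, comp_id_l. reflexivity.
    + rewrite <- H2, <- comp_assoc, P2, comp_id_r. reflexivity.
  - intros E F G H1 H2. apply ses_mor_equiv. exact (ses_mor_equiv_l H1 (equiv_ses_mor H2)).
Qed.

Lemma pushS_ex (A C A' : Ob) (E : ses W A C) (a : Hom A A') :
  exists F : ses W A' C, exists t, pushout_seq (si E) (sd E) a t (si F) (sd F).
Proof.
  destruct (push_ex E a) as [S [t [i' [d' H]]]]. exists (Ses (push_W H)), t. exact H.
Qed.

Definition pushS (A C A' : Ob) (a : Hom A A') (E : ses W A C) : ses W A' C :=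
  proj1_sig (constructive_indefinite_description _ (pushS_ex E a)).

Lemma pushS_spec (A C A' : Ob) (a : Hom A A') (E : ses W A C) :
  exists t, pushout_seq (si E) (sd E) a t (si (pushS a E)) (sd (pushS a E)).
Proof. unfold pushS. destruct (constructive_indefinite_description _ _) as [F HF]. exact HF. Qed.

Lemma pullS_ex (A C C' : Ob) (E : ses W A C) (c : Hom C' C) :
  exists F : ses W A C', exists s, pullback_seq (si E) (sd E) c s (sd F) (si F).
Proof.
  destruct (pull_ex E c) as [P [s [d' [i' H]]]]. exists (Ses (pull_W H)), s. exact H.
Qed.

Definition pullS (A C C' : Ob) (c : Hom C' C) (E : ses W A C) : ses W A C' :=
  proj1_sig (constructive_indefinite_description _ (pullS_ex E c)).

Lemma pullS_spec (A C C' : Ob) (c : Hom C' C) (E : ses W A C) :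
  exists s, pullback_seq (si E) (sd E) c s (sd (pullS c E)) (si (pullS c E)).
Proof. unfold pullS. destruct (constructive_indefinite_description _ _) as [F HF]. exact HF. Qed.

Lemma ses_mor_push (A C A' : Ob) (a : Hom A A') (E : ses W A C) :
  ses_mor E (pushS a E) a (idm C).
Proof.
  destruct (pushS_spec a E) as [t [[Hc _] [Ht _]]]. exists t. split; [exact Hc|].
  rewrite comp_id_l. exact Ht.
Qed.

Lemma ses_mor_pull (A C C' : Ob) (c : Hom C' C) (E : ses W A C) :
  ses_mor (pullS c E) E (idm A) c.
Proof.
  destruct (pullS_spec c E) as [s [[Hc _] [Hs _]]]. exists s. split; [|exact Hc].
  rewrite comp_id_r. exact Hs.
Qed.

Lemma push_univ (A C A' : Ob) (a : Hom A A') (E : ses W A C) (F : ses W A' C) :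
  ses_mor E F a (idm C) -> ses_equiv (pushS a E) F.
Proof.
  intros [b [Hb1 Hb2]]. rewrite comp_id_l in Hb2.
  destruct (pushS_spec a E) as [t [HP [Ht Hi']]].
  pose proof HP as [Hc U].
  destruct (U _ b (si F) Hb1) as [h [[Hh1 Hh2] _]].
  apply ses_mor_equiv. exists h. split.
  - rewrite comp_id_r. exact Hh2.
  - rewrite comp_id_l. apply (pushout_ext HP).
    + rewrite <- comp_assoc, Hh1, Hb2, Ht. reflexivity.
    + rewrite <- comp_assoc, Hh2, Hi', (W_zero (sW F)). reflexivity.
Qed.

Lemma pull_univ (A C C' : Ob) (c : Hom C' C) (E : ses W A C) (F : ses W A C') :
  ses_mor F E (idm A) c -> ses_equiv F (pullS c E).
Proof.
  intros [b [Hb1 Hb2]]. rewrite comp_id_r in Hb1.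
  destruct (pullS_spec c E) as [s [HP [Hs Hi']]].
  pose proof HP as [Hc U].
  destruct (U _ b (sd F) Hb2) as [h [[Hh1 Hh2] _]].
  apply ses_mor_equiv. exists h. split.
  - rewrite comp_id_r. apply (pullback_ext HP).
    + rewrite comp_assoc, Hh1, Hb1, Hs. reflexivity.
    + rewrite comp_assoc, Hh2, Hi', (W_zero (sW F)). reflexivity.
  - rewrite comp_id_l. exact Hh2.
Qed.

Lemma push_pull_factor (A C A' C' : Ob) (E : ses W A C) (F : ses W A' C')
  (a : Hom A A') (c : Hom C C') :
  ses_mor E F a c -> ses_equiv (pushS a E) (pullS c F).
Proof.
  intros [b [Hb1 Hb2]].
  destruct (pullS_spec c F) as [s [HP [Hs Hi']]].
  pose proof HP as [Hc U].
  destruct (U _ b (sd E) Hb2) as [be [[Hbe1 Hbe2] _]].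
  apply push_univ. exists be. split.
  - apply (pullback_ext HP).
    + rewrite !comp_assoc, Hbe1, Hs, Hb1. reflexivity.
    + rewrite !comp_assoc, Hbe2, Hi', (W_zero (sW E)), comp_0l. reflexivity.
  - rewrite comp_id_l. exact Hbe2.
Qed.

Definition dsum (A1 C1 A2 C2 : Ob) (E1 : ses W A1 C1) (E2 : ses W A2 C2)
  : ses W (bp A1 A2) (bp C1 C2) :=
  Ses (W_sum (sW E1) (sW E2)).

Lemma ses_mor_dsum (A1 C1 A2 C2 A1' C1' A2' C2' : Ob) (E1 : ses W A1 C1) (E2 : ses W A2 C2)
  (F1 : ses W A1' C1') (F2 : ses W A2' C2') a1 c1 a2 c2 :
  ses_mor E1 F1 a1 c1 -> ses_mor E2 F2 a2 c2 ->
  ses_mor (dsum E1 E2) (dsum F1 F2) (hsum a1 a2) (hsum c1 c2).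
Proof.
  intros [b1 [H1 H1']] [b2 [H2 H2']]. exists (hsum b1 b2). simpl.
  rewrite !hsum_comp, H1, H2, H1', H2'. split; reflexivity.
Qed.

Lemma ses_mor_bp1 (A1 C1 A2 C2 : Ob) (E1 : ses W A1 C1) (E2 : ses W A2 C2) :
  ses_mor (dsum E1 E2) E1 (bp1 A1 A2) (bp1 C1 C2).
Proof. exists (bp1 _ _). simpl. rewrite !bp1_hsum. split; reflexivity. Qed.

Lemma ses_mor_bp2 (A1 C1 A2 C2 : Ob) (E1 : ses W A1 C1) (E2 : ses W A2 C2) :
  ses_mor (dsum E1 E2) E2 (bp2 A1 A2) (bp2 C1 C2).
Proof. exists (bp2 _ _). simpl. rewrite !bp2_hsum. split; reflexivity. Qed.

Lemma ses_mor_diag (A C : Ob) (E : ses W A C) : ses_mor E (dsum E E) (diag A) (diag C).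
Proof. exists (diag (smid E)). simpl. rewrite !diag_nat. split; reflexivity. Qed.

Lemma ses_mor_codiag (A C : Ob) (E : ses W A C) : ses_mor (dsum E E) E (codiag A) (codiag C).
Proof. exists (codiag (smid E)). simpl. rewrite !codiag_nat. split; reflexivity. Qed.

Global Instance pushS_proper (A C A' : Ob) (a : Hom A A') :
  Proper (@ses_equiv X W A C ==> @ses_equiv X W A' C) (pushS a).
Proof.
  intros E E' H. symmetry. apply push_univ.
  exact (ses_mor_equiv_l (symmetry H) (ses_mor_push a E)).
Qed.

Global Instance pullS_proper (A C C' : Ob) (c : Hom C' C) :
  Proper (@ses_equiv X W A C ==> @ses_equiv X W A C') (pullS c).
Proof. intros E E' H. apply pull_univ. exact (ses_mor_equiv_r (ses_mor_pull c E) H). Qed.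

Global Instance dsum_proper (A1 C1 A2 C2 : Ob) :
  Proper (@ses_equiv X W A1 C1 ==> @ses_equiv X W A2 C2 ==> @ses_equiv X W (bp A1 A2) (bp C1 C2)) (@dsum A1 C1 A2 C2).
Proof.
  intros E1 E1' H1 E2 E2' H2. apply ses_mor_equiv.
  pose proof (ses_mor_dsum (equiv_ses_mor H1) (equiv_ses_mor H2)) as H.
  rewrite !hsum_id in H. exact H.
Qed.

Lemma push_id (A C : Ob) (E : ses W A C) : ses_equiv (pushS (idm A) E) E.
Proof. apply push_univ, equiv_ses_mor. reflexivity. Qed.

Lemma pull_id (A C : Ob) (E : ses W A C) : ses_equiv (pullS (idm C) E) E.
Proof. symmetry. apply pull_univ, equiv_ses_mor. reflexivity. Qed.

Lemma push_comp (A A' A'' C : Ob) (a : Hom A A') (b : Hom A' A'') (E : ses W A C) :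
  ses_equiv (pushS (comp b a) E) (pushS b (pushS a E)).
Proof.
  apply push_univ. pose proof (ses_mor_comp (ses_mor_push a E) (ses_mor_push b (pushS a E))) as H.
  rewrite comp_id_l in H. exact H.
Qed.

Lemma pull_comp (A C C' C'' : Ob) (c : Hom C' C) (c' : Hom C'' C') (E : ses W A C) :
  ses_equiv (pullS (comp c c') E) (pullS c' (pullS c E)).
Proof.
  symmetry. apply pull_univ.
  pose proof (ses_mor_comp (ses_mor_pull c' (pullS c E)) (ses_mor_pull c E)) as H.
  rewrite comp_id_l in H. exact H.
Qed.

Lemma push_pull (A A' C C' : Ob) (a : Hom A A') (c : Hom C' C) (E : ses W A C) :
  ses_equiv (pushS a (pullS c E)) (pullS c (pushS a E)).
Proof.
  apply push_pull_factor. pose proof (ses_mor_comp (ses_mor_pull c E) (ses_mor_push a E)) as H.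
  rewrite comp_id_l, comp_id_r in H. exact H.
Qed.

Lemma push_dsum (A1 C1 A2 C2 A1' A2' : Ob) (E1 : ses W A1 C1) (E2 : ses W A2 C2)
  (a1 : Hom A1 A1') (a2 : Hom A2 A2') :
  ses_equiv (pushS (hsum a1 a2) (dsum E1 E2)) (dsum (pushS a1 E1) (pushS a2 E2)).
Proof.
  apply push_univ. pose proof (ses_mor_dsum (ses_mor_push a1 E1) (ses_mor_push a2 E2)) as H.
  rewrite hsum_id in H. exact H.
Qed.

Lemma pull_dsum (A1 C1 A2 C2 C1' C2' : Ob) (E1 : ses W A1 C1) (E2 : ses W A2 C2)
  (c1 : Hom C1' C1) (c2 : Hom C2' C2) :
  ses_equiv (pullS (hsum c1 c2) (dsum E1 E2)) (dsum (pullS c1 E1) (pullS c2 E2)).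
Proof.
  symmetry. apply pull_univ.
  pose proof (ses_mor_dsum (ses_mor_pull c1 E1) (ses_mor_pull c2 E2)) as H.
  rewrite hsum_id in H. exact H.
Qed.

(* The split sequence A = A -> C0 given by (E0), and its pullbacks 0 : C -> C0. *)
Lemma unit_seq_ex (A : Ob) : exists p : {C0 : Ob & ses W A C0}, True.
Proof. destruct (W_E0 A) as [C0 [d H]]. exists (existT _ C0 (Ses H)). exact I. Qed.

Definition unit_seq (A : Ob) : {C0 : Ob & ses W A C0} :=
  proj1_sig (constructive_indefinite_description _ (unit_seq_ex A)).

Definition zeroS (A C : Ob) : ses W A C :=
  pullS (hzero C (projT1 (unit_seq A))) (projT2 (unit_seq A)).

Lemma ses_mor_zero (A C A' C' : Ob) (E : ses W A C) (F : ses W A' C') :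
  ses_mor E F (hzero A A') (hzero C C').
Proof. exists (hzero _ _). rewrite !comp_0l, !comp_0r. split; reflexivity. Qed.

Lemma push_zero (A A' C : Ob) (E : ses W A C) : ses_equiv (pushS (hzero A A') E) (zeroS A' C).
Proof. apply push_pull_factor, ses_mor_zero. Qed.

Lemma pull_zero (A C C' : Ob) (E : ses W A C) : ses_equiv (pullS (hzero C' C) E) (zeroS A C').
Proof.
  rewrite <- (push_zero A (zeroS A C')). symmetry.
  apply push_pull_factor, ses_mor_zero.
Qed.

(** * The Baer sum and the group laws *)

Definition pushpull (AF CF A C : Ob) (F : ses W AF CF) (p : Hom AF A) (j : Hom C CF)
  : ses W A C :=
  pushS p (pullS j F).

Definition sumS (A C : Ob) (E1 E2 : ses W A C) : ses W A C :=
  pushpull (dsum E1 E2) (codiag A) (diag C).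

Global Instance sumS_proper (A C : Ob) :
  Proper (@ses_equiv X W A C ==> @ses_equiv X W A C ==> @ses_equiv X W A C) (@sumS A C).
Proof. intros E1 E1' H1 E2 E2' H2. unfold sumS, pushpull. rewrite H1, H2. reflexivity. Qed.

(* (a + b)E = aE + bE, using a + b = nabla (a (+) b) Delta. *)
Lemma push_add (A A' C : Ob) (a b : Hom A A') (E : ses W A C) :
  ses_equiv (pushS (hadd a b) E) (sumS (pushS a E) (pushS b E)).
Proof.
  rewrite hadd_via_biproduct, !push_comp, (push_pull_factor (ses_mor_diag E)),
    push_pull, push_dsum.
  reflexivity.
Qed.

Lemma pull_add (A C C' : Ob) (c e : Hom C' C) (E : ses W A C) :
  ses_equiv (pullS (hadd c e) E) (sumS (pullS c E) (pullS e E)).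
Proof.
  rewrite hadd_via_biproduct, !pull_comp, <- (push_pull_factor (ses_mor_codiag E)),
    <- !push_pull, pull_dsum.
  reflexivity.
Qed.

Lemma push_sum (A A' C : Ob) (a : Hom A A') (E F : ses W A C) :
  ses_equiv (pushS a (sumS E F)) (sumS (pushS a E) (pushS a F)).
Proof.
  unfold sumS, pushpull.
  rewrite <- push_comp, codiag_nat, push_comp, push_pull, push_dsum. reflexivity.
Qed.

Lemma pull_sum (A C C' : Ob) (c : Hom C' C) (E F : ses W A C) :
  ses_equiv (pullS c (sumS E F)) (sumS (pullS c E) (pullS c F)).
Proof.
  unfold sumS, pushpull.
  rewrite <- push_pull, <- pull_comp, diag_nat, pull_comp, pull_dsum. reflexivity.
Qed.

Lemma sum_zero_r (A C : Ob) (E : ses W A C) : ses_equiv (sumS E (zeroS A C)) E.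
Proof.
  transitivity (sumS (pushS (idm A) E) (pushS (hzero A A) E)).
  { rewrite push_id, push_zero. reflexivity. }
  rewrite <- push_add, hadd_0. apply push_id.
Qed.

Lemma sum_zero_l (A C : Ob) (E : ses W A C) : ses_equiv (sumS (zeroS A C) E) E.
Proof.
  transitivity (sumS (pushS (hzero A A) E) (pushS (idm A) E)).
  { rewrite push_id, push_zero. reflexivity. }
  rewrite <- push_add, hadd_0l. apply push_id.
Qed.

Lemma sum_opp (A C : Ob) (E : ses W A C) :
  ses_equiv (sumS E (pushS (hopp (idm A)) E)) (zeroS A C).
Proof.
  transitivity (sumS (pushS (idm A) E) (pushS (hopp (idm A)) E)).
  { rewrite push_id. reflexivity. }
  rewrite <- push_add, hadd_opp. apply push_zero.
Qed.

Lemma pushpull_addl (AF CF A C : Ob) (F : ses W AF CF) (p p' : Hom AF A) (j : Hom C CF) :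
  ses_equiv (pushpull F (hadd p p') j) (sumS (pushpull F p j) (pushpull F p' j)).
Proof. apply push_add. Qed.

Lemma pushpull_addr (AF CF A C : Ob) (F : ses W AF CF) (p : Hom AF A) (j j' : Hom C CF) :
  ses_equiv (pushpull F p (hadd j j')) (sumS (pushpull F p j) (pushpull F p j')).
Proof. unfold pushpull at 1. rewrite pull_add. apply push_sum. Qed.

Lemma pushpull_eval (AF CF A C C0 : Ob) (F : ses W AF CF) (E : ses W A C0) (p : Hom AF A)
  (q : Hom CF C0) (j : Hom C CF) :
  ses_mor F E p q -> ses_equiv (pushpull F p j) (pullS (comp q j) E).
Proof.
  intro H. unfold pushpull. rewrite push_pull, (push_pull_factor H), pull_comp. reflexivity.
Qed.

Lemma pushpull_one (AF CF A C : Ob) (F : ses W AF CF) (E : ses W A C) (p : Hom AF A)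
  (q : Hom CF C) (j : Hom C CF) :
  ses_mor F E p q -> comp q j = idm C -> ses_equiv (pushpull F p j) E.
Proof. intros H1 H2. rewrite (pushpull_eval j H1), H2. apply pull_id. Qed.

Lemma pushpull_zero (AF CF A C C0 : Ob) (F : ses W AF CF) (E : ses W A C0) (p : Hom AF A)
  (q : Hom CF C0) (j : Hom C CF) :
  ses_mor F E p q -> comp q j = hzero C C0 -> ses_equiv (pushpull F p j) (zeroS A C).
Proof. intros H1 H2. rewrite (pushpull_eval j H1), H2. apply pull_zero. Qed.

Lemma pushpull_sum2 (AF CF A C : Ob) (F : ses W AF CF) (p1 p2 : Hom AF A) (j1 j2 : Hom C CF)
  (E1 E2 : ses W A C) :
  ses_equiv (pushpull F p1 j1) E1 -> ses_equiv (pushpull F p1 j2) (zeroS A C) ->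
  ses_equiv (pushpull F p2 j1) (zeroS A C) -> ses_equiv (pushpull F p2 j2) E2 ->
  ses_equiv (pushpull F (hadd p1 p2) (hadd j1 j2)) (sumS E1 E2).
Proof.
  intros H11 H12 H21 H22.
  rewrite pushpull_addl, !pushpull_addr, H11, H12, H21, H22, sum_zero_r, sum_zero_l.
  reflexivity.
Qed.

Lemma pushpull_zero_addl (AF CF A C : Ob) (F : ses W AF CF) (p1 p2 : Hom AF A) (j : Hom C CF) :
  ses_equiv (pushpull F p1 j) (zeroS A C) -> ses_equiv (pushpull F p2 j) (zeroS A C) ->
  ses_equiv (pushpull F (hadd p1 p2) j) (zeroS A C).
Proof. intros H1 H2. rewrite pushpull_addl, H1, H2. apply sum_zero_r. Qed.

Lemma pushpull_zero_addr (AF CF A C : Ob) (F : ses W AF CF) (p : Hom AF A) (j1 j2 : Hom C CF) :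
  ses_equiv (pushpull F p j1) (zeroS A C) -> ses_equiv (pushpull F p j2) (zeroS A C) ->
  ses_equiv (pushpull F p (hadd j1 j2)) (zeroS A C).
Proof. intros H1 H2. rewrite pushpull_addr, H1, H2. apply sum_zero_r. Qed.

(* Commutativity: E1 + E2 and E2 + E1 are both nabla (E1 (+) E2) Delta, read with
   the two summands of nabla and Delta in either order. *)
Lemma sum_comm (A C : Ob) (E1 E2 : ses W A C) : ses_equiv (sumS E1 E2) (sumS E2 E1).
Proof.
  set (F := dsum E1 E2).
  pose proof (ses_mor_bp1 E1 E2) as M1. pose proof (ses_mor_bp2 E1 E2) as M2.
  assert (H11 : ses_equiv (pushpull F (bp1 A A) (bi1 C C)) E1)
    by (apply (pushpull_one M1), bp1_bi1).
  assert (H12 : ses_equiv (pushpull F (bp1 A A) (bi2 C C)) (zeroS A C))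
    by (apply (pushpull_zero M1), bp1_bi2).
  assert (H21 : ses_equiv (pushpull F (bp2 A A) (bi1 C C)) (zeroS A C))
    by (apply (pushpull_zero M2), bp2_bi1).
  assert (H22 : ses_equiv (pushpull F (bp2 A A) (bi2 C C)) E2)
    by (apply (pushpull_one M2), bp2_bi2).
  rewrite <- (pushpull_sum2 H22 H21 H12 H11), (hadd_comm (bp2 A A)), (hadd_comm (bi2 C C)).
  reflexivity.
Qed.

Ltac biproduct_simpl := rewrite <- ?comp_assoc;
  repeat (rewrite ?bp1_bi1_comp, ?bp2_bi2_comp, ?bp1_bi2_comp, ?bp2_bi1_comp, ?bp1_bi1,
            ?bp2_bi2, ?bp1_bi2, ?bp2_bi1, ?comp_0l, ?comp_0r, ?comp_id_l, ?comp_id_r);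
  reflexivity.

(* Associativity: both sides are pushpull (E1 (+) (E2 (+) E3)) (p1 + p2 + p3)
   (j1 + j2 + j3) with the coordinate projections p_k and injections j_k,
   bracketed in the two possible ways. *)
Lemma sum_assoc (A C : Ob) (E1 E2 E3 : ses W A C) :
  ses_equiv (sumS E1 (sumS E2 E3)) (sumS (sumS E1 E2) E3).
Proof.
  set (F := dsum E1 (dsum E2 E3)).
  pose proof (ses_mor_bp1 E1 (dsum E2 E3)) as M1.
  pose proof (ses_mor_comp (ses_mor_bp2 E1 (dsum E2 E3)) (ses_mor_bp1 E2 E3)) as M2.
  pose proof (ses_mor_comp (ses_mor_bp2 E1 (dsum E2 E3)) (ses_mor_bp2 E2 E3)) as M3.
  fold F in M1, M2, M3.
  set (p1 := bp1 A (bp A A)). set (p2 := comp (bp1 A A) (bp2 A (bp A A))).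
  set (p3 := comp (bp2 A A) (bp2 A (bp A A))).
  set (j1 := bi1 C (bp C C)). set (j2 := comp (bi2 C (bp C C)) (bi1 C C)).
  set (j3 := comp (bi2 C (bp C C)) (bi2 C C)).
  assert (H11 : ses_equiv (pushpull F p1 j1) E1)
    by (apply (pushpull_one M1); unfold j1; biproduct_simpl).
  assert (H12 : ses_equiv (pushpull F p1 j2) (zeroS A C))
    by (apply (pushpull_zero M1); unfold j2; biproduct_simpl).
  assert (H13 : ses_equiv (pushpull F p1 j3) (zeroS A C))
    by (apply (pushpull_zero M1); unfold j3; biproduct_simpl).
  assert (H21 : ses_equiv (pushpull F p2 j1) (zeroS A C))
    by (apply (pushpull_zero M2); unfold j1; biproduct_simpl).
  assert (H22 : ses_equiv (pushpull F p2 j2) E2)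
    by (apply (pushpull_one M2); unfold j2; biproduct_simpl).
  assert (H23 : ses_equiv (pushpull F p2 j3) (zeroS A C))
    by (apply (pushpull_zero M2); unfold j3; biproduct_simpl).
  assert (H31 : ses_equiv (pushpull F p3 j1) (zeroS A C))
    by (apply (pushpull_zero M3); unfold j1; biproduct_simpl).
  assert (H32 : ses_equiv (pushpull F p3 j2) (zeroS A C))
    by (apply (pushpull_zero M3); unfold j2; biproduct_simpl).
  assert (H33 : ses_equiv (pushpull F p3 j3) E3)
    by (apply (pushpull_one M3); unfold j3; biproduct_simpl).
  pose proof (pushpull_sum2 (pushpull_sum2 H11 H12 H21 H22)
    (pushpull_zero_addl H13 H23) (pushpull_zero_addr H31 H32) H33) as Sum12_3.
  pose proof (pushpull_sum2 H11 (pushpull_zero_addr H12 H13)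
    (pushpull_zero_addl H21 H31) (pushpull_sum2 H22 H23 H32 H33)) as Sum1_23.
  rewrite !hadd_assoc in Sum1_23.
  rewrite <- Sum1_23. exact Sum12_3.
Qed.

(** * Passing to equivalence classes *)

Definition rep (A C : Ob) (x : Ext W C A) : ses W A C :=
  proj1_sig (constructive_indefinite_description _ (proj2_sig x)).

Lemma cls_rep (A C : Ob) (x : Ext W C A) : cls (rep x) = x.
Proof.
  unfold rep. destruct x as [P HP]. simpl.
  destruct (constructive_indefinite_description _ HP) as [E HE]. simpl.
  apply eq_sig_hprop; [intros; apply proof_irrelevance|]. simpl. symmetry; exact HE.
Qed.

Lemma cls_surj (A C : Ob) (x : Ext W C A) : exists E, x = cls E.
Proof. exists (rep x). symmetry; apply cls_rep. Qed.

Lemma cls_eq (A C : Ob) (E F : ses W A C) : ses_equiv E F -> cls E = cls F.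
Proof.
  intro H. apply eq_sig_hprop; [intros; apply proof_irrelevance|]. simpl.
  apply functional_extensionality. intro G. apply propositional_extensionality.
  rewrite H. reflexivity.
Qed.

Lemma rep_cls (A C : Ob) (E : ses W A C) : ses_equiv (rep (cls E)) E.
Proof.
  pose proof (f_equal (@proj1_sig _ _) (cls_rep (cls E))) as H. simpl in H.
  rewrite H. reflexivity.
Qed.

Definition pushE (A A' C : Ob) (a : Hom A A') (x : Ext W C A) : Ext W C A' :=
  cls (pushS a (rep x)).
Definition pullE (A C C' : Ob) (c : Hom C' C) (x : Ext W C A) : Ext W C' A :=
  cls (pullS c (rep x)).
Definition addE (A C : Ob) (x y : Ext W C A) : Ext W C A := cls (sumS (rep x) (rep y)).
Definition zeroE (A C : Ob) : Ext W C A := cls (zeroS A C).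
Definition oppE (A C : Ob) (x : Ext W C A) : Ext W C A := cls (pushS (hopp (idm A)) (rep x)).

Lemma pushE_cls (A A' C : Ob) (a : Hom A A') (E : ses W A C) : pushE a (cls E) = cls (pushS a E).
Proof. apply cls_eq. rewrite rep_cls. reflexivity. Qed.
Lemma pullE_cls (A C C' : Ob) (c : Hom C' C) (E : ses W A C) : pullE c (cls E) = cls (pullS c E).
Proof. apply cls_eq. rewrite rep_cls. reflexivity. Qed.
Lemma addE_cls (A C : Ob) (E F : ses W A C) : addE (cls E) (cls F) = cls (sumS E F).
Proof. apply cls_eq. rewrite !rep_cls. reflexivity. Qed.
Lemma oppE_cls (A C : Ob) (E : ses W A C) : oppE (cls E) = cls (pushS (hopp (idm A)) E).
Proof. apply cls_eq. rewrite rep_cls. reflexivity. Qed.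

Ltac choose_reps :=
  repeat match goal with
  | x : Ext _ _ _ |- _ => let E := fresh "E" in destruct (cls_surj x) as [E ->]
  end.

Lemma pushE_repr (A C A' S : Ob) (E : ses W A C) (a : Hom A A')
  (t : Hom (smid E) S) (i' : Hom A' S) (d' : Hom S C) (HS : pushout_seq (si E) (sd E) a t i' d') :
  exists H : W A' S C i' d', pushE a (cls E) = cls (Ses H).
Proof.
  exists (push_W HS). rewrite pushE_cls. apply cls_eq, push_univ.
  pose proof HS as [[Hc _] [Ht _]]. exists t. simpl. rewrite comp_id_l. split; assumption.
Qed.

Lemma pullE_repr (A C C' P : Ob) (E : ses W A C) (c : Hom C' C)
  (s : Hom P (smid E)) (d' : Hom P C') (i' : Hom A P) (HS : pullback_seq (si E) (sd E) c s d' i') :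
  exists H : W A P C' i' d', pullE c (cls E) = cls (Ses H).
Proof.
  exists (pull_W HS). rewrite pullE_cls. apply cls_eq. symmetry. apply pull_univ.
  pose proof HS as [[Hc _] [Hs _]]. exists s. simpl. rewrite comp_id_r. split; assumption.
Qed.

Lemma baer_sum_ex (A C : Ob) (E1 E2 : ses W A C) :
  exists (P : Ob) (s : Hom P (bp (smid E1) (smid E2))) (dP : Hom P C)
         (iP : Hom (bp A A) P) (S : Ob) (t : Hom P S) (iS : Hom A S) (dS : Hom S C),
    pullback_seq (hsum (si E1) (si E2)) (hsum (sd E1) (sd E2)) (diag C) s dP iP /\
    pushout_seq iP dP (codiag A) t iS dS.
Proof.
  destruct (pull_ex (dsum E1 E2) (diag C)) as [P [s [dP [iP HP]]]].
  destruct (push_ex (Ses (pull_W HP)) (codiag A)) as [S [t [iS [dS HS]]]].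
  exists P, s, dP, iP, S, t, iS, dS. split; [exact HP|exact HS].
Qed.

Lemma addE_repr (A C P S : Ob) (E1 E2 : ses W A C)
  (s : Hom P (bp (smid E1) (smid E2))) (dP : Hom P C) (iP : Hom (bp A A) P)
  (t : Hom P S) (iS : Hom A S) (dS : Hom S C) :
  pullback_seq (hsum (si E1) (si E2)) (hsum (sd E1) (sd E2)) (diag C) s dP iP ->
  pushout_seq iP dP (codiag A) t iS dS ->
  exists H : W A S C iS dS, addE (cls E1) (cls E2) = cls (Ses H).
Proof.
  intros HP HS.
  destruct (pullE_repr (E:=dsum E1 E2) HP) as [HP' EqP].
  destruct (pushE_repr (E:=Ses HP') HS) as [HS' EqS].
  exists HS'. rewrite <- EqS, <- EqP, pullE_cls, pushE_cls, addE_cls. reflexivity.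
Qed.

Lemma Ext_abgroup (A C : Ob) : is_abgroup (@addE A C) (zeroE A C) (@oppE A C).
Proof.
  split; [|split; [|split]]; intros; choose_reps.
  - rewrite !addE_cls. apply cls_eq, sum_assoc.
  - rewrite !addE_cls. apply cls_eq, sum_comm.
  - unfold zeroE at 1. rewrite addE_cls. apply cls_eq, sum_zero_r.
  - rewrite oppE_cls, addE_cls. apply cls_eq, sum_opp.
Qed.

Lemma pushE_addE (A A' C : Ob) (a : Hom A A') (x y : Ext W C A) :
  pushE a (addE x y) = addE (pushE a x) (pushE a y).
Proof. choose_reps. rewrite addE_cls, !pushE_cls, addE_cls. apply cls_eq, push_sum. Qed.

Lemma pullE_addE (A C C' : Ob) (c : Hom C' C) (x y : Ext W C A) :
  pullE c (addE x y) = addE (pullE c x) (pullE c y).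
Proof. choose_reps. rewrite addE_cls, !pullE_cls, addE_cls. apply cls_eq, pull_sum. Qed.

Lemma pushE_id (A C : Ob) (x : Ext W C A) : pushE (idm A) x = x.
Proof. choose_reps. rewrite pushE_cls. apply cls_eq, push_id. Qed.

Lemma pushE_comp (A A' A'' C : Ob) (a : Hom A A') (b : Hom A' A'') (x : Ext W C A) :
  pushE (comp b a) x = pushE b (pushE a x).
Proof. choose_reps. rewrite !pushE_cls. apply cls_eq, push_comp. Qed.

Lemma pullE_id (A C : Ob) (x : Ext W C A) : pullE (idm C) x = x.
Proof. choose_reps. rewrite pullE_cls. apply cls_eq, pull_id. Qed.

Lemma pullE_comp (A C C' C'' : Ob) (c : Hom C' C) (c' : Hom C'' C') (x : Ext W C A) :
  pullE (comp c c') x = pullE c' (pullE c x).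
Proof. choose_reps. rewrite !pullE_cls. apply cls_eq, pull_comp. Qed.

Lemma pushE_pullE (A A' C C' : Ob) (a : Hom A A') (c : Hom C' C) (x : Ext W C A) :
  pushE a (pullE c x) = pullE c (pushE a x).
Proof. choose_reps. rewrite pullE_cls, !pushE_cls, pullE_cls. apply cls_eq, push_pull. Qed.

Lemma pushE_hadd (A A' C : Ob) (a b : Hom A A') (x : Ext W C A) :
  pushE (hadd a b) x = addE (pushE a x) (pushE b x).
Proof. choose_reps. rewrite !pushE_cls, addE_cls. apply cls_eq, push_add. Qed.

Lemma pullE_hadd (A C C' : Ob) (c e : Hom C' C) (x : Ext W C A) :
  pullE (hadd c e) x = addE (pullE c x) (pullE e x).
Proof. choose_reps. rewrite !pullE_cls, addE_cls. apply cls_eq, pull_add. Qed.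

End WeaklyExact.

Theorem mainTheorem7 (X : AddCat) (W : Wclass X) (HW : weakly_exact W) :
  exists (pushE : forall (A A' C : Ob X), Hom A A' -> Ext W C A -> Ext W C A')
         (pullE : forall (A C C' : Ob X), Hom C' C -> Ext W C A -> Ext W C' A)
         (addE : forall (A C : Ob X), Ext W C A -> Ext W C A -> Ext W C A)
         (zeroE : forall (A C : Ob X), Ext W C A)
         (oppE : forall (A C : Ob X), Ext W C A -> Ext W C A),
    (* W(C,a)(E) = aE is well defined: pushouts exist, lie in W, and
       their class depends only on the class of E *)
    (forall (A C A' : Ob X) (E : ses W A C) (a : Hom A A'),
        exists (S : Ob X) (t : Hom (smid E) S) (i' : Hom A' S) (d' : Hom S C),
          pushout_seq (si E) (sd E) a t i' d') /\
    (forall (A C A' S : Ob X) (E : ses W A C) (a : Hom A A')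
            (t : Hom (smid E) S) (i' : Hom A' S) (d' : Hom S C),
        pushout_seq (si E) (sd E) a t i' d' ->
        exists H : W A' S C i' d',
          pushE A A' C a (cls E) = cls (Ses H)) /\
    (* W(c,A)(E) = Ec is well defined *)
    (forall (A C C' : Ob X) (E : ses W A C) (c : Hom C' C),
        exists (P : Ob X) (s : Hom P (smid E)) (d' : Hom P C') (i' : Hom A P),
          pullback_seq (si E) (sd E) c s d' i') /\
    (forall (A C C' P : Ob X) (E : ses W A C) (c : Hom C' C)
            (s : Hom P (smid E)) (d' : Hom P C') (i' : Hom A P),
        pullback_seq (si E) (sd E) c s d' i' ->
        exists H : W A P C' i' d',
          pullE A C C' c (cls E) = cls (Ses H)) /\
    (* the Baer sum E1 + E2 = nabla_A (E1 (+) E2) Delta_C is well defined *)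
    (forall (A C : Ob X) (E1 E2 : ses W A C),
        exists (P : Ob X) (s : Hom P (bp (smid E1) (smid E2))) (dP : Hom P C)
               (iP : Hom (bp A A) P) (S : Ob X) (t : Hom P S) (iS : Hom A S)
               (dS : Hom S C),
          pullback_seq (hsum (si E1) (si E2)) (hsum (sd E1) (sd E2)) (diag C) s dP iP /\
          pushout_seq iP dP (codiag A) t iS dS) /\
    (forall (A C P S : Ob X) (E1 E2 : ses W A C)
            (s : Hom P (bp (smid E1) (smid E2))) (dP : Hom P C) (iP : Hom (bp A A) P)
            (t : Hom P S) (iS : Hom A S) (dS : Hom S C),
        pullback_seq (hsum (si E1) (si E2)) (hsum (sd E1) (sd E2)) (diag C) s dP iP ->
        pushout_seq iP dP (codiag A) t iS dS ->
        exists H : W A S C iS dS,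
          addE A C (cls E1) (cls E2) = cls (Ses H)) /\
    (* each W(C,A) is an abelian group under the Baer sum *)
    (forall A C : Ob X, is_abgroup (addE A C) (zeroE A C) (oppE A C)) /\
    (* W(C,a) and W(c,A) are group homomorphisms *)
    (forall (A A' C : Ob X) (a : Hom A A') (x y : Ext W C A),
        pushE A A' C a (addE A C x y)
        = addE A' C (pushE A A' C a x) (pushE A A' C a y)) /\
    (forall (A C C' : Ob X) (c : Hom C' C) (x y : Ext W C A),
        pullE A C C' c (addE A C x y)
        = addE A C' (pullE A C C' c x) (pullE A C C' c y)) /\
    (* functoriality (covariant in A, contravariant in C) *)
    (forall (A C : Ob X) (x : Ext W C A), pushE A A C (idm A) x = x) /\
    (forall (A A' A'' C : Ob X) (a : Hom A A') (b : Hom A' A'') (x : Ext W C A),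
        pushE A A'' C (comp b a) x = pushE A' A'' C b (pushE A A' C a x)) /\
    (forall (A C : Ob X) (x : Ext W C A), pullE A C C (idm C) x = x) /\
    (forall (A C C' C'' : Ob X) (c : Hom C' C) (c' : Hom C'' C') (x : Ext W C A),
        pullE A C C'' (comp c c') x = pullE A C' C'' c' (pullE A C C' c x)) /\
    (* bifunctoriality: the two actions commute *)
    (forall (A A' C C' : Ob X) (a : Hom A A') (c : Hom C' C) (x : Ext W C A),
        pushE A A' C' a (pullE A C C' c x) = pullE A' C C' c (pushE A A' C a x)) /\
    (* additivity in each variable *)
    (forall (A A' C : Ob X) (a b : Hom A A') (x : Ext W C A),
        pushE A A' C (hadd a b) x = addE A' C (pushE A A' C a x) (pushE A A' C b x)) /\
    (forall (A C C' : Ob X) (c e : Hom C' C) (x : Ext W C A),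
        pullE A C C' (hadd c e) x = addE A C' (pullE A C C' c x) (pullE A C C' e x)).
Proof.
  exists (pushE HW), (pullE HW), (addE HW), (zeroE HW), (oppE HW).
  exact (conj (push_ex HW) (conj (pushE_repr HW) (conj (pull_ex HW) (conj (pullE_repr HW)
    (conj (baer_sum_ex HW) (conj (addE_repr HW) (conj (Ext_abgroup HW)
    (conj (pushE_addE HW) (conj (pullE_addE HW) (conj (pushE_id HW) (conj (pushE_comp HW)
    (conj (pullE_id HW) (conj (pullE_comp HW) (conj (pushE_pullE HW)
    (conj (pushE_hadd HW) (pullE_hadd HW)))))))))))))))).
Qed.
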